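(* Let $(A,\mathcal H)$ be a left bialgebroid. For every right $\mathcal H$-comodule $A^o$-subring $B$ of $\mathcal H$ via $t$, the set $\mathcal HB^+$ is a left ideal two-sided coideal of $\mathcal H$, and the assignment $B\mapsto\mathcal HB^+$ is inclusion-preserving.
   Context: $\Bbbk$ is a field. A left bialgebroid $(A,\mathcal H)$: $\Bbbk$-algebras $A,\mathcal H$, algebra maps $s:A\to\mathcal H$, $t:A^o\to\mathcal H$ with commuting images, $A$-bilinear $\Delta:\mathcal H\to\mathcal H\otimes_A\mathcal H$, $\varepsilon:\mathcal H\to A$ (bimodule structure $a\cdot h\cdot b=s(a)t(b)h$; $\mathcal H\otimes_A\mathcal H$ = quotient of $\mathcal H\otimes\mathcal H$ by span of $t(a)x\otimes y-x\otimes s(a)y$), with $(\mathcal H,\Delta,\varepsilon)$ a coassociative counital $A$-coring, $\Delta$ an algebra map into the Takeuchi product $\{\sum x_i\otimes_Ay_i:\sum x_it(a)\otimes_Ay_i=\sum x_i\otimes_Ay_is(a)\ \forall a\}$, $\varepsilon(xs(\varepsilon(y)))=\varepsilon(xy)=\varepsilon(xt(\varepsilon(y)))$, $\varepsilon(1)=1$. $\mathcal H^+=\ker\varepsilon$, $B^+=B\cap\mathcal H^+$. Right $\mathcal H$-comodule $A^o$-subring via $t$: subalgebra $B\supseteq t(A)$ with a coassociative counital right $A$-linear coaction $\delta:B\to B\otimes_A\mathcal H$ ($b\cdot a=t(a)b$; $\mathcal H$ left via $s$) such that $(\iota\otimes_A\mathcal H)\delta=\Delta\iota$, $\iota$ the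 inclusion. Left ideal two-sided coideal: left ideal $I$ with $\varepsilon(I)=0$ and $\Delta(I)\subseteq$ image of $I\otimes_A\mathcal H+\mathcal H\otimes_AI$ in $\mathcal H\otimes_A\mathcal H$. *)

(* Left bialgebroids over a field k, with balanced tensor
   products over A represented by finite formal sums of simple tensors
   (seq of pairs / triples), identified via the universal property of
   the balanced tensor product. *)
From HB Require Import structures.
From mathcomp Require Import all_boot all_order all_algebra.
Set Implicit Arguments. Unset Strict Implicit. Unset Printing Implicit Defensive.
Import GRing.Theory.
Local Open Scope ring_scope.

Section Bialgebroid.
Variables (k : fieldType) (A H : algType k).
Variables (s t : A -> H).

(* phi : H -> H -> V is k-bilinear (first argument restricted to the
   k-subspace P) and A-balanced: phi (x . a) y = phi x (a . y), where
   x . a = t(a) x and a . y = s(a) y. *)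
Definition balanced2 (P : H -> Prop) (V : lmodType k) (phi : H -> H -> V) :=
  ( (forall (c : k) x x' y, P x -> P x' ->
         phi (c *: x + x') y = c *: phi x y + phi x' y) /\
      (forall (c : k) x y y', P x ->
         phi x (c *: y + y') = c *: phi x y + phi x y') /\
      (forall a x y, P x -> phi (t a * x) y = phi x (s a * y))).

(* equality in P (x)_A H of the formal sums u and v (first legs in P);
   P = fun _ => True gives H (x)_A H *)
Definition tensor2_eq (P : H -> Prop) (u v : seq (H * H)) : Prop :=
  forall (V : lmodType k) (phi : H -> H -> V), balanced2 P phi ->
    \sum_(p <- u) phi p.1 p.2 = \sum_(p <- v) phi p.1 p.2.

Definition balanced3 (P : H -> Prop) (V : lmodType k) (phi : H -> H -> H -> V) :=
  ( (forall (c : k) x x' y z, P x -> P x' ->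
         phi (c *: x + x') y z = c *: phi x y z + phi x' y z) /\
      (forall (c : k) x y y' z, P x ->
         phi x (c *: y + y') z = c *: phi x y z + phi x y' z) /\
      (forall (c : k) x y z z', P x ->
         phi x y (c *: z + z') = c *: phi x y z + phi x y z') /\
      (forall a x y z, P x -> phi (t a * x) y z = phi x (s a * y) z) /\
      (forall a x y z, P x -> phi x (t a * y) z = phi x y (s a * z))).

Definition tensor3_eq (P : H -> Prop) (u v : seq (H * H * H)) : Prop :=
  forall (V : lmodType k) (phi : H -> H -> H -> V), balanced3 P phi ->
    \sum_(p <- u) phi p.1.1 p.1.2 p.2 = \sum_(p <- v) phi p.1.1 p.1.2 p.2.

Definition allH : H -> Prop := fun _ => True.

(* (A, H, s, t, Delta, eps) is a left bialgebroid; Delta h is a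
   representative of Delta(h) in H (x)_A H *)
Definition is_left_bialgebroid (Delta : H -> seq (H * H)) (eps : H -> A) : Prop :=
  (
      ( (forall (c : k) a b, s (c *: a + b) = c *: s a + s b) /\
          (forall a b, s (a * b) = s a * s b) /\
          s 1 = 1) /\
      ( (forall (c : k) a b, t (c *: a + b) = c *: t a + t b) /\
          (forall a b, t (a * b) = t b * t a) /\
          t 1 = 1) /\
      (forall a b, s a * t b = t b * s a) /\
      ( (forall (c : k) x y, tensor2_eq allH (Delta (c *: x + y))
                 ([seq (c *: p.1, p.2) | p <- Delta x] ++ Delta y)) /\
          (forall a b h, tensor2_eq allH (Delta (s a * t b * h))
                 [seq (s a * p.1, t b * p.2) | p <- Delta h])) /\
      ( (forall (c : k) x y, eps (c *: x + y) = c *: eps x + eps y) /\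
          (forall a b h, eps (s a * t b * h) = a * eps h * b)) /\
      (forall h, tensor3_eq allH
          [seq (q.1, q.2, p.2) | p <- Delta h, q <- Delta p.1]
          [seq (p.1, q.1, q.2) | p <- Delta h, q <- Delta p.2]) /\
      (forall h, \sum_(p <- Delta h) s (eps p.1) * p.2 = h /\
                 \sum_(p <- Delta h) t (eps p.2) * p.1 = h) /\
      (* Delta lands in the Takeuchi product and is an algebra map *)
      ( (forall h a, tensor2_eq allH [seq (p.1 * t a, p.2) | p <- Delta h]
                                      [seq (p.1, p.2 * s a) | p <- Delta h]) /\
          (forall x y, tensor2_eq allH (Delta (x * y))
              [seq (p.1 * q.1, p.2 * q.2) | p <- Delta x, q <- Delta y]) /\
          tensor2_eq allH (Delta 1) [:: (1, 1)]) /\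
      ( (forall x y, eps (x * s (eps y)) = eps (x * y)) /\
          (forall x y, eps (x * y) = eps (x * t (eps y))) /\
          eps 1 = 1)).

(* B is a right H-comodule A^o-subring of H via t, with coaction delta;
   delta b is a representative of delta(b) in B (x)_A H *)
Definition is_comodule_subring (Delta : H -> seq (H * H)) (eps : H -> A)
    (B : H -> Prop) (delta : H -> seq (H * H)) : Prop :=
  (
      ( B 1 /\ (forall x y, B x -> B y -> B (x + y)) /\
          (forall (c : k) x, B x -> B (c *: x)) /\
          (forall x y, B x -> B y -> B (x * y)) /\
          (forall a, B (t a))) /\
      (forall b p, B b -> p \in delta b -> B p.1) /\
      ( (forall (c : k) x y, B x -> B y -> tensor2_eq B (delta (c *: x + y))
                 ([seq (c *: p.1, p.2) | p <- delta x] ++ delta y)) /\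
          (forall a b, B b -> tensor2_eq B (delta (t a * b))
                 [seq (p.1, t a * p.2) | p <- delta b])) /\
      (forall b, B b -> tensor3_eq B
          [seq (q.1, q.2, p.2) | p <- delta b, q <- delta p.1]
          [seq (p.1, q.1, q.2) | p <- delta b, q <- Delta p.2]) /\
      (forall b, B b -> \sum_(p <- delta b) t (eps p.2) * p.1 = b) /\
      (forall b, B b -> tensor2_eq allH (delta b) (Delta b))).

Definition HBplus (eps : H -> A) (B : H -> Prop) : H -> Prop :=
  fun x => exists l : seq (H * H),
    (forall p, p \in l -> B p.2 /\ eps p.2 = 0) /\
    x = \sum_(p <- l) p.1 * p.2.

Definition is_left_ideal_coideal (Delta : H -> seq (H * H)) (eps : H -> A)
    (I : H -> Prop) : Prop :=
  ( I 0 /\ (forall x y, I x -> I y -> I (x + y)) /\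
      (forall h x, I x -> I (h * x)) /\
      (forall x, I x -> eps x = 0) /\
      (forall x, I x -> exists u : seq (H * H),
          (forall p, p \in u -> I p.1 \/ I p.2) /\
          tensor2_eq allH (Delta x) u)).

End Bialgebroid.

(* Write Delta(b) = delta(b) = sum b_(0) (x) b_(1) for b in B^+ and split each
   b_(0) as (b_(0) - t(eps b_(0))) + t(eps b_(0)); the first summand lies in
   B^+.  The Takeuchi property moves t(eps b_(0)) across the tensor sign as
   s(eps b_(0)), and the counit collapses sum s(eps b_(0)) b_(1) to b, so
   Delta(h b) = sum h_(1) (b_(0) - t(eps b_(0))) (x) h_(2) b_(1)
              + sum h_(1) (x) h_(2) b,
   whose terms have their first, respectively second, leg in H B^+. *)
From HB Require Import structures.
From mathcomp Require Import all_boot all_order all_algebra.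
Set Implicit Arguments. Unset Strict Implicit. Unset Printing Implicit Defensive.
Import GRing.Theory.
Local Open Scope ring_scope.

Lemma double_eq0 (V : zmodType) (v : V) : v = v + v -> v = 0.
Proof. by rewrite -{1}[v]addr0 => /addrI. Qed.

Section LinearMaps.
Variables (R : pzRingType) (U V : lmodType R) (f : U -> V).
Hypothesis f_lin : forall c x y, f (c *: x + y) = c *: f x + f y.

Lemma lin_morphD : {morph f : x y / x + y}.
Proof. by move=> x y; have := f_lin 1 x y; rewrite !scale1r. Qed.

Lemma lin_morph0 : f 0 = 0.
Proof. by apply: double_eq0; rewrite -lin_morphD addr0. Qed.

End LinearMaps.

Section BalancedMaps.
Variables (k : fieldType) (A H : algType k) (s t : A -> H).
Local Notation balanced := (balanced2 s t (@allH k H)).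
Local Notation teq := (tensor2_eq s t (@allH k H)).

Section OneMap.
Variables (V : lmodType k) (phi : H -> H -> V).
Hypothesis phi_bal : balanced phi.

Lemma balanced2_addl x x' y : phi (x + x') y = phi x y + phi x' y.
Proof. by have [L _] := phi_bal; have := L 1 x x' y I I; rewrite !scale1r. Qed.

Lemma balanced2_addr x y y' : phi x (y + y') = phi x y + phi x y'.
Proof. by have [_ [R _]] := phi_bal; have := R 1 x y y' I; rewrite !scale1r. Qed.

Lemma balanced2_tl a x y : phi (t a * x) y = phi x (s a * y).
Proof. by have [_ [_ T]] := phi_bal; exact: T. Qed.

Lemma balanced2_sumr x (I : Type) (r : seq I) (F : I -> H) :
  phi x (\sum_(i <- r) F i) = \sum_(i <- r) phi x (F i).
Proof.
apply: (big_morph (phi x)); first exact: balanced2_addr.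
by apply: double_eq0; rewrite -balanced2_addr addr0.
Qed.

Lemma balanced2_mul x y : balanced (fun u v => phi (u * x) (v * y)).
Proof.
have [L [R T]] := phi_bal; split; [|split].
- by move=> c u u' v _ _; rewrite mulrDl -scalerAl L.
- by move=> c u v v' _; rewrite mulrDl -scalerAl R.
- by move=> a u v _; rewrite -mulrA T // mulrA.
Qed.

End OneMap.

Lemma tensor2_eq_trans u v w : teq u v -> teq v w -> teq u w.
Proof. by move=> uv vw V phi bal; rewrite uv // vw. Qed.

Lemma tensor2_eq_cat u1 u2 v1 v2 :
  teq u1 v1 -> teq u2 v2 -> teq (u1 ++ u2) (v1 ++ v2).
Proof. by move=> e1 e2 V phi bal; rewrite !big_cat e1 // e2. Qed.

End BalancedMaps.

Section HBplus.
Variables (k : fieldType) (A H : algType k) (eps : H -> A) (B : H -> Prop).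

Lemma HBplus0 : HBplus eps B 0.
Proof. by exists [::]; rewrite big_nil. Qed.

Lemma HBplusD x y :
  HBplus eps B x -> HBplus eps B y -> HBplus eps B (x + y).
Proof.
move=> [l1 [Bl1 ->]] [l2 [Bl2 ->]]; exists (l1 ++ l2); rewrite big_cat.
by split=> // p; rewrite mem_cat => /orP [/Bl1|/Bl2].
Qed.

Lemma HBplus_mull h x : HBplus eps B x -> HBplus eps B (h * x).
Proof.
move=> [l [Bl ->]]; exists [seq (h * p.1, p.2) | p <- l]; split.
  by move=> q /mapP [p pl ->]; exact: Bl p pl.
by rewrite big_map mulr_sumr; apply: eq_bigr => p _; rewrite mulrA.
Qed.

Lemma HBplus_mul h b : B b -> eps b = 0 -> HBplus eps B (h * b).
Proof.
move=> Bb eb; exists [:: (h, b)]; rewrite big_seq1.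
by split=> // p; rewrite inE => /eqP ->.
Qed.

Lemma HBplus_mono (B1 B2 : H -> Prop) :
  (forall x, B1 x -> B2 x) -> forall x, HBplus eps B1 x -> HBplus eps B2 x.
Proof.
move=> B12 x [l [Bl ->]]; exists l; split=> // p /Bl [B1p ep].
by split=> //; exact: B12.
Qed.

End HBplus.

Section Bialgebroid.
Variables (k : fieldType) (A H : algType k) (s t : A -> H).
Variables (Delta : H -> seq (H * H)) (eps : H -> A).
Local Notation balanced := (balanced2 s t (@allH k H)).
Local Notation teq := (tensor2_eq s t (@allH k H)).

Hypothesis s_lin : forall (c : k) a b, s (c *: a + b) = c *: s a + s b.
Hypothesis s_mul : forall a b, s (a * b) = s a * s b.
Hypothesis s1 : s 1 = 1.
Hypothesis t_lin : forall (c : k) a b, t (c *: a + b) = c *: t a + t b.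
Hypothesis Delta_lin : forall (c : k) x y,
  teq (Delta (c *: x + y)) ([seq (c *: p.1, p.2) | p <- Delta x] ++ Delta y).
Hypothesis eps_lin : forall (c : k) x y, eps (c *: x + y) = c *: eps x + eps y.
Hypothesis eps_bilin : forall a b h, eps (s a * t b * h) = a * eps h * b.
Hypothesis Delta_counit : forall h, \sum_(p <- Delta h) s (eps p.1) * p.2 = h.
Hypothesis Delta_Takeuchi : forall h a,
  teq [seq (p.1 * t a, p.2) | p <- Delta h] [seq (p.1, p.2 * s a) | p <- Delta h].
Hypothesis Delta_mul : forall x y,
  teq (Delta (x * y)) [seq (p.1 * q.1, p.2 * q.2) | p <- Delta x, q <- Delta y].
Hypothesis eps_mul_t : forall x y, eps (x * y) = eps (x * t (eps y)).
Hypothesis eps1 : eps 1 = 1.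

Lemma eps_tl a x : eps (t a * x) = eps x * a.
Proof. by have := eps_bilin 1 a x; rewrite s1 !mul1r. Qed.

Lemma eps_t a : eps (t a) = a.
Proof. by have := eps_tl a 1; rewrite mulr1 eps1 mul1r. Qed.

Lemma eps_mul_eq0 h b : eps b = 0 -> eps (h * b) = 0.
Proof.
by move=> eb; rewrite eps_mul_t eb (lin_morph0 t_lin) mulr0 (lin_morph0 eps_lin).
Qed.

Lemma eps_HBplus B x : HBplus eps B x -> eps x = 0.
Proof.
move=> [l [Bl ->]]; rewrite (big_morph eps (lin_morphD eps_lin) (lin_morph0 eps_lin)).
by rewrite big1_seq // => p /andP [_ /Bl [_ ep]]; exact: eps_mul_eq0.
Qed.

Lemma Delta_add x y : teq (Delta (x + y)) (Delta x ++ Delta y).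
Proof.
move=> V phi bal; have := Delta_lin 1 x y bal; rewrite scale1r => ->.
by rewrite !big_cat big_map; congr (_ + _); apply: eq_bigr => p _; rewrite scale1r.
Qed.

Lemma Delta0 : teq (Delta 0) [::].
Proof.
move=> V phi bal; rewrite big_nil; apply: double_eq0.
by rewrite -big_cat -Delta_add // addr0.
Qed.

Definition Delta_lmul (h : H) (V : lmodType k) (phi : H -> H -> V) x y :=
  \sum_(p <- Delta h) phi (p.1 * x) (p.2 * y).

Lemma Delta_lmul_balanced (h : H) (V : lmodType k) (phi : H -> H -> V) :
  balanced phi -> balanced (Delta_lmul h phi).
Proof.
move=> bal; have [L [R _]] := bal; rewrite /Delta_lmul; split; [|split].
- move=> c x x' y _ _; rewrite scaler_sumr -big_split; apply: eq_bigr => p _ /=.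
  by rewrite mulrDr -scalerAr L.
- move=> c x y y' _; rewrite scaler_sumr -big_split; apply: eq_bigr => p _ /=.
  by rewrite mulrDr -scalerAr R.
- move=> a x y _; have := Delta_Takeuchi h a (balanced2_mul bal x y).
  rewrite !big_map /=; under eq_bigr do rewrite -mulrA; move=> ->.
  by apply: eq_bigr => p _; rewrite mulrA.
Qed.

Definition Delta_in_IH_HI (I : H -> Prop) x := exists u : seq (H * H),
  (forall p, p \in u -> I p.1 \/ I p.2) /\ teq (Delta x) u.

Lemma Delta_in_IH_HI0 I : Delta_in_IH_HI I 0.
Proof. by exists [::]; split=> //; exact: Delta0. Qed.

Lemma Delta_in_IH_HID I x y :
  Delta_in_IH_HI I x -> Delta_in_IH_HI I y -> Delta_in_IH_HI I (x + y).
Proof.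
move=> [u [Iu eu]] [v [Iv ev]]; exists (u ++ v); split.
  by move=> p; rewrite mem_cat => /orP [/Iu|/Iv].
exact: tensor2_eq_trans (Delta_add x y) (tensor2_eq_cat eu ev).
Qed.

Section ComoduleSubring.
Variables (B : H -> Prop) (delta : H -> seq (H * H)).
Hypothesis B_add : forall x y, B x -> B y -> B (x + y).
Hypothesis B_scale : forall (c : k) x, B x -> B (c *: x).
Hypothesis B_t : forall a, B (t a).
Hypothesis delta_legs : forall b p, B b -> p \in delta b -> B p.1.
Hypothesis delta_Delta : forall b, B b -> teq (delta b) (Delta b).

Lemma delta_counit b : B b -> \sum_(q <- delta b) s (eps q.1) * q.2 = b.
Proof.
move=> Bb; pose chi x y := s (eps x) * y.
have chi_bal : balanced chi.
  split; [|split].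
  - by move=> c x x' y _ _; rewrite /chi eps_lin s_lin mulrDl scalerAl.
  - by move=> c x y y' _; rewrite /chi mulrDr scalerAr.
  - by move=> a x y _; rewrite /chi eps_tl s_mul mulrA.
by rewrite (delta_Delta Bb chi_bal); exact: Delta_counit.
Qed.

Lemma Bplus_sub_t_eps q : B q -> B (q - t (eps q)) /\ eps (q - t (eps q)) = 0.
Proof.
move=> Bq; have -> : q - t (eps q) = (-1) *: t (eps q) + q by rewrite scaleN1r addrC.
split; first by apply: B_add => //; exact: B_scale.
by rewrite eps_lin eps_t scaleN1r addNr.
Qed.

Definition Delta_mul_Bplus h b :=
  [seq (p.1 * (q.1 - t (eps q.1)), p.2 * q.2) | p <- Delta h, q <- delta b]
  ++ [seq (p.1, p.2 * b) | p <- Delta h].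

Lemma Delta_mul_BplusE h b : B b -> teq (Delta (h * b)) (Delta_mul_Bplus h b).
Proof.
move=> Bb V phi bal; have psi_bal := Delta_lmul_balanced h bal.
rewrite (Delta_mul h b bal) big_allpairs_dep big_cat !big_allpairs_dep big_map /=.
rewrite exchange_big [X in _ = X + _]exchange_big /=.
transitivity (\sum_(q <- Delta b) Delta_lmul h phi q.1 q.2) => //.
rewrite -(delta_Delta Bb psi_bal).
have split_leg (q : H * H) : Delta_lmul h phi q.1 q.2 =
    Delta_lmul h phi (q.1 - t (eps q.1)) q.2 + Delta_lmul h phi 1 (s (eps q.1) * q.2).
  by rewrite -(balanced2_tl psi_bal) mulr1 -(balanced2_addl psi_bal) subrK.
rewrite (eq_bigr _ (fun q _ => split_leg q)).
rewrite big_split /= -(balanced2_sumr psi_bal) (delta_counit Bb); congr (_ + _).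
by apply: eq_bigr => p _; rewrite mulr1.
Qed.

Lemma Delta_mul_Bplus_legs h b : B b -> eps b = 0 -> forall p,
  p \in Delta_mul_Bplus h b -> HBplus eps B p.1 \/ HBplus eps B p.2.
Proof.
move=> Bb eb z; rewrite mem_cat.
case/orP=> [/allpairsP [[p q] [_ qd ->]] | /mapP [p _ ->]] /=.
  by left; case: (Bplus_sub_t_eps (delta_legs Bb qd)); exact: HBplus_mul.
by right; exact: HBplus_mul.
Qed.

Lemma Delta_HBplus x : HBplus eps B x -> Delta_in_IH_HI (HBplus eps B) x.
Proof.
move=> [l [Bl ->]]; rewrite big_seq.
apply: (big_ind (Delta_in_IH_HI _)); [exact: Delta_in_IH_HI0 | exact: Delta_in_IH_HID |].
move=> p /Bl [Bp ep]; exists (Delta_mul_Bplus p.1 p.2); split.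
  exact: Delta_mul_Bplus_legs.
exact: Delta_mul_BplusE.
Qed.

End ComoduleSubring.
End Bialgebroid.

Theorem proposition2p6 (k : fieldType) (A H : algType k) (s t : A -> H)
    (Delta : H -> seq (H * H)) (eps : H -> A) :
  is_left_bialgebroid s t Delta eps ->
  (forall (B : H -> Prop) (delta : H -> seq (H * H)),
      is_comodule_subring s t Delta eps B delta ->
      is_left_ideal_coideal s t Delta eps (HBplus eps B)) /\
  (forall (B1 B2 : H -> Prop) (delta1 delta2 : H -> seq (H * H)),
      is_comodule_subring s t Delta eps B1 delta1 ->
      is_comodule_subring s t Delta eps B2 delta2 ->
      (forall x, B1 x -> B2 x) ->
      forall x, HBplus eps B1 x -> HBplus eps B2 x).
Proof.
move=> [[s_lin [s_mul s1]] [[t_lin _] [_ [[Delta_lin _] [[eps_lin eps_bilin]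
  [_ [counit [[Takeuchi [Delta_mul _]] [_ [eps_mul_t eps1]]]]]]]]]].
split=> [B delta [[_ [B_add [B_scale [_ B_t]]]] [delta_legs [_ [_ [_ delta_Delta]]]]] |];
  last by move=> B1 B2 d1 d2 _ _; exact: HBplus_mono.
split; first exact: HBplus0.
split; first exact: HBplusD.
split; first exact: HBplus_mull.
split=> x; first exact: (eps_HBplus t_lin eps_lin eps_mul_t (B := B)).
exact: (Delta_HBplus s_lin s_mul s1 Delta_lin eps_lin eps_bilin
  (fun h => (counit h).1) Takeuchi Delta_mul eps1 B_add B_scale B_t delta_legs
  delta_Delta (x := x)).
Qed.
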